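(* Consider the no-show model with homogeneous costs and the network $(\mathcal G,\mathcal E)$ in the context. For $j\in[N]$, $\rho\ge0$, $\mathbf s\in\mathcal S$ and $p\ge1$, assign to each arc $(k,\ell)\in\mathcal E$ the length $g_{k\ell j}=f_{1j}(1-\bar\lambda_1,y_1)$ if $k=\texttt S$ and $\ell=(\bar\lambda_1,y_1)$; $g_{k\ell j}=f_{ij}(\bar\lambda_{i-1}-\bar\lambda_i+1,y_i)$ if $k=(\bar\lambda_{i-1},y_{i-1})\in\mathcal L(i-1)$ and $\ell=(\bar\lambda_i,y_i)\in\mathcal L(i)$, $i\in[2,n]$; $g_{k\ell j}=0$ if $\ell=\texttt E$. Then $$\omega'_j(\rho,\mathbf s)=\max_{\mathbf z}\sum_{(k,\ell)\in\mathcal E}g_{k\ell j}z_{k\ell}\ \text{ s.t. }\sum_{\ell:(k,\ell)\in\mathcal E}z_{k\ell}-\sum_{\ell:(\ell,k)\in\mathcal E}z_{\ell k}=\begin{cases}1&k=\texttt S\\0&k\ne\texttt S,\texttt E\\-1&k=\texttt E\end{cases}\ \forall k\in\mathcal G,\quad z_{k\ell}\ge0\ \forall(k,\ell)\in\mathcal E,$$ where $\omega'_j(\rho,\mathbf s)=\sup_{\boldsymbol\xi\in\Xi}\{g(\mathbf s,\boldsymbol\xi)-\rho\|\boldsymbol\xi-\widehat{\boldsymbol\xi}^j\|_p^p\}$.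
   Context: Notation: $[m]=\{1,\dots,m\}$. $n,N\ge1$, $T>0$, $\mathcal S=\{\mathbf s\in\mathbb R^n:\mathbf s\ge0,\sum_is_i\le T\}$. Homogeneous costs $c_1=\dots=c_n=1$, $d_1=\dots=d_n=d_0\ge0$, overtime $C\ge0$. Bounds $0\le u^L_i<u^U_i<\infty$; integer $K\in[n]$. $\Lambda=\{\boldsymbol\lambda\in\{0,1\}^n:\sum_i(1-\lambda_i)\le K\}$, $\Xi=\{(\boldsymbol\mu,\boldsymbol\lambda)\in\mathbb R^n\times\Lambda:u^L_i\lambda_i\le\mu_i\le u^U_i\lambda_i\}$, data $\widehat{\boldsymbol\xi}^j=(\widehat{\boldsymbol\mu}^j,\widehat{\boldsymbol\lambda}^j)\in\Xi$. $g(\mathbf s,\boldsymbol\xi)$ is the optimal value of $\min_{\mathbf w\in\mathbb R^{n+1},\mathbf v\in\mathbb R^n}\sum_{i}(c_i\lambda_iw_i+d_iv_i)+Cw_{n+1}$ s.t. $w_i-v_{i-1}=\mu_{i-1}+w_{i-1}-s_{i-1}$ ($i=2,\dots,n+1$), $\mathbf w\ge0,w_1=0,\mathbf v\ge0$. For $\lambda_i\in\{0,1\}$, $y_i\in\mathbb R$: $f_{ij}(\lambda_i,y_i)=\sup_{u^L_i\lambda_i\le\mu_i\le u^U_i\lambda_i}\{y_i(\mu_i-s_i)-\rho|\mu_i-\widehat\mu^j_i|^p-\rho|\lambda_i-\widehat\lambda^j_i|^p\}$. Network: $\mathcal Y_i=\{-d_0+m:m=0,\dots,n-i\}\cup\{C+m:m=0,\dots,n-i\}$,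 layers $\mathcal L(i)=\{(\bar\lambda,y):\bar\lambda\in\{0,\dots,K\},y\in\mathcal Y_i\}$, nodes $\mathcal G=\bigcup_{i=1}^n\mathcal L(i)\cup\{\texttt S,\texttt E\}$. Arcs: from $\texttt S$ to each $(\bar\lambda_1,y_1)\in\mathcal L(1)$ with $\bar\lambda_1\in\{0,1\}$; for $i\in[2,n]$ from $(\bar\lambda_{i-1},y_{i-1})\in\mathcal L(i-1)$ to $(\bar\lambda_i,y_i)\in\mathcal L(i)$ whenever $\bar\lambda_i\in\{\bar\lambda_{i-1},\bar\lambda_{i-1}+1\}$ and $y_{i-1}\in\{-d_0,\ y_i+(\bar\lambda_{i-1}-\bar\lambda_i+1)\}$; and from each node of $\mathcal L(n)$ to $\texttt E$. *)

From HB Require Import structures.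
From mathcomp Require Import all_boot all_order all_algebra.
From mathcomp Require Import all_classical all_reals all_analysis.
Set Implicit Arguments. Unset Strict Implicit. Unset Printing Implicit Defensive.
Import Order.TTheory GRing.Theory Num.Theory.
Local Open Scope classical_set_scope.
Local Open Scope ring_scope.

(* Conventions: all vectors are functions nat -> R indexed 1-based, as in the
   paper; only the entries 1..n (resp. 1..n+1 for w) are ever used. *)

Section NoShow.
Variable R : realType.

Definition recourse_obj (n : nat) (c d : nat -> R) (C : R) (lam w v : nat -> R) : R :=
  \sum_(1 <= i < n.+1) (c i * lam i * w i + d i * v i) + C * w n.+1.

Definition recourse_feas (n : nat) (s mu w v : nat -> R) : Prop :=
  (forall i, (2 <= i <= n.+1)%N -> w i - v i.-1 = mu i.-1 + w i.-1 - s i.-1) /\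
  (forall i, (1 <= i <= n.+1)%N -> 0 <= w i) /\ w 1%N = 0 /\
  (forall i, (1 <= i <= n)%N -> 0 <= v i).

Definition g_val (n : nat) (c d : nat -> R) (C : R) (s mu lam : nat -> R) : R :=
  inf [set r | exists w v, recourse_feas n s mu w v /\ r = recourse_obj n c d C lam w v].

Definition inXi (n K : nat) (uL uU : nat -> R) (mu lam : nat -> R) : Prop :=
  (forall i, (1 <= i <= n)%N -> lam i = 0 \/ lam i = 1) /\
  \sum_(1 <= i < n.+1) (1 - lam i) <= K%:R /\
  (forall i, (1 <= i <= n)%N -> uL i * lam i <= mu i <= uU i * lam i).

Definition dist_pp (n : nat) (p : R) (mu lam muh lamh : nat -> R) : R :=
  \sum_(1 <= i < n.+1) (`|mu i - muh i| `^ p + `|lam i - lamh i| `^ p).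

Definition omega' (n K : nat) (d0 C : R) (uL uU : nat -> R) (p rho : R)
    (s muh lamh : nat -> R) : \bar R :=
  ereal_sup [set x : \bar R | exists mu lam, inXi n K uL uU mu lam /\
     x = (g_val n (fun _ => 1) (fun _ => d0) C s mu lam
          - rho * dist_pp n p mu lam muh lamh)%:E].

Definition f_ij (uL uU : nat -> R) (p rho : R) (s muh lamh : nat -> R)
    (i : nat) (la y : R) : R :=
  sup [set r | exists mu, uL i * la <= mu <= uU i * la /\
     r = y * (mu - s i) - rho * (`|mu - muh i| `^ p) - rho * (`|la - lamh i| `^ p)].

(* Network.  A node is (layer, lambdabar, y): layer 0 is the source S,
   layer n+1 is the sink E, layer i in 1..n is L(i). *)
Definition node := (nat * nat * R)%type.
Definition nodeS : node := (0%N, 0%N, 0).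
Definition nodeE (n : nat) : node := (n.+1, 0%N, 0).
Definition layer (k : node) : nat := k.1.1.
Definition lbar (k : node) : nat := k.1.2.
Definition yval (k : node) : R := k.2.

Definition Yset (n : nat) (d0 C : R) (i : nat) : seq R :=
  [seq - d0 + m%:R | m <- iota 0 (n - i).+1] ++ [seq C + m%:R | m <- iota 0 (n - i).+1].

Definition Lset (n K : nat) (d0 C : R) (i : nat) : seq node :=
  [seq ((i, lb), y) | lb <- iota 0 K.+1, y <- Yset n d0 C i].

Definition nodes (n K : nat) (d0 C : R) : seq node :=
  undup (nodeS :: nodeE n :: flatten [seq Lset n K d0 C i | i <- iota 1 n]).

Definition is_arc (n : nat) (d0 : R) (kl : node * node) : bool :=
  let: (k, l) := kl in
  [&& layer k == 0%N, layer l == 1%N & lbar l <= 1]%N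
  || [&& layer l == n.+1, layer k == n, lbar l == 0%N & yval l == 0]
  || [&& (2 <= layer l <= n)%N, layer k == (layer l).-1,
         (lbar l == lbar k) || (lbar l == (lbar k).+1) &
         (yval k == - d0) || (yval k == yval l + ((lbar k)%:R - (lbar l)%:R + 1))].

Definition arcs (n K : nat) (d0 C : R) : seq (node * node) :=
  [seq kl <- [seq (k, l) | k <- nodes n K d0 C, l <- nodes n K d0 C] | is_arc n d0 kl].

Definition arc_len (n : nat) (uL uU : nat -> R) (p rho : R) (s muh lamh : nat -> R)
    (kl : node * node) : R :=
  let: (k, l) := kl in
  if layer k == 0%N then f_ij uL uU p rho s muh lamh 1 (1 - (lbar l)%:R) (yval l)
  else if layer l == n.+1 then 0
  else f_ij uL uU p rho s muh lamh (layer l) ((lbar k)%:R - (lbar l)%:R + 1) (yval l).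

Definition path_lp (n K : nat) (d0 C : R) (uL uU : nat -> R) (p rho : R)
    (s muh lamh : nat -> R) : \bar R :=
  let A := arcs n K d0 C in
  ereal_sup [set x : \bar R | exists z : node * node -> R,
     (forall kl, kl \in A -> 0 <= z kl) /\
     (forall k, k \in nodes n K d0 C ->
        \sum_(kl <- A | kl.1 == k) z kl - \sum_(kl <- A | kl.2 == k) z kl
        = (if k == nodeS then 1 else if k == nodeE n then -1 else 0)) /\
     x = (\sum_(kl <- A) arc_len n uL uU p rho s muh lamh kl * z kl)%:E].

End NoShow.

(* The recourse value g(s, xi) is a linear program with dual
     max sum_i y_i (mu_i - s_i)  s.t.  y_i >= -d0,  y_n <= C,  y_(i-1) - y_i <= lambda_i.
   The greedy schedule w_(i+1) = (w_i + mu_i - s_i)^+ and the backward dual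
   y_i = y_(i+1) + lambda_(i+1) if patient i+1 waits, y_i = -d0 otherwise, close the
   duality gap.  This dual takes its values in Y_i, so with lambdabar_i the number of
   no-shows among the first i patients the nodes (lambdabar_i, y_i) form an S-E path;
   conversely every S-E path encodes a scenario lambda in Lambda with a feasible dual y.
   Maximizing over mu stage by stage turns g(s, xi) - rho ||xi - xihat||_p^p into the
   sum of the f_ij along the path, so omega'_j is the length of a longest S-E path.
   The path LP has the same value: the indicator of a path is a unit flow, and the
   longest-path potentials pi satisfy g_kl <= pi_k - pi_l on every arc carrying flow
   (arcs into nodes that cannot reach E carry none), so any unit flow is worth at
   most pi_S. *)

From HB Require Import structures.
From mathcomp Require Import all_boot all_order all_algebra.
From mathcomp Require Import all_classical all_reals all_analysis.
From mathcomp Require Import zify ring lra.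
Import Order.TTheory GRing.Theory Num.Theory.
Local Open Scope classical_set_scope.
Local Open Scope ring_scope.
Set Implicit Arguments. Unset Strict Implicit. Unset Printing Implicit Defensive.

Section BigSeq.
Variables (R : nmodType) (T : eqType).

Lemma big_pred1_seq (r : seq T) (x : T) (F : T -> R) :
  uniq r -> x \in r -> \sum_(y <- r | y == x) F y = F x.
Proof. by move=> ur xr; rewrite -big_filter filter_pred1_uniq // big_seq1. Qed.

Lemma partition_big_seq (U : eqType) (r : seq T) (N : seq U) (h : T -> U) (F : T -> R) :
  uniq N -> {in r, forall x, h x \in N} ->
  \sum_(x <- r) F x = \sum_(k <- N) \sum_(x <- r | h x == k) F x.
Proof.
move=> uN hr; rewrite (exchange_big_dep xpredT) //= big_seq_cond [RHS]big_seq_cond.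
apply: eq_bigr => x /andP[xr _]; rewrite -big_filter.
rewrite (eq_filter (a2 := pred1 (h x))) => [|k]; last by rewrite /= eq_sym.
by rewrite filter_pred1_uniq ?big_seq1 // hr.
Qed.

End BigSeq.

Lemma big_indicator_sub (R : pzSemiRingType) (T : eqType) (r P : seq T) (Q : pred T)
    (F : T -> R) :
  uniq r -> uniq P -> {subset P <= r} ->
  \sum_(x <- r | Q x) F x * (x \in P)%:R = \sum_(x <- P | Q x) F x.
Proof.
move=> ur uP sPr.
rewrite (eq_bigr (fun x => if x \in P then F x else 0)) => [|x _]; last first.
  by case: (x \in P); rewrite ?mulr1 ?mulr0.
rewrite -big_mkcondr (eq_bigl (fun x => (x \in P) && Q x)) => [|x]; last by rewrite andbC.
rewrite -big_filter_cond; apply/perm_big/uniq_perm; rewrite ?filter_uniq //.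
by move=> x; rewrite mem_filter; case xP: (x \in P); rewrite //= sPr.
Qed.

Section UnitFlow.
Variables (R : pzRingType) (T : eqType) (N : seq T) (A : seq (T * T)) (S E : T).

Definition is_unit_flow (z : T * T -> R) :=
  forall k, k \in N ->
    \sum_(kl <- A | kl.1 == k) z kl - \sum_(kl <- A | kl.2 == k) z kl
    = (if k == S then 1 else if k == E then -1 else 0).

Hypotheses (uN : uniq N) (SN : S \in N) (EN : E \in N) (SE : S != E).
Hypothesis AN : forall kl, kl \in A -> (kl.1 \in N) && (kl.2 \in N).

Lemma unit_flow_potential_diff (z : T * T -> R) (pi : T -> R) : is_unit_flow z ->
  \sum_(kl <- A) (pi kl.1 - pi kl.2) * z kl = pi S - pi E.
Proof.
move=> hz; have fibers (h : T * T -> T) : {in A, forall kl, h kl \in N} ->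
    \sum_(kl <- A) pi (h kl) * z kl = \sum_(k <- N) pi k * \sum_(kl <- A | h kl == k) z kl.
  move=> hA; rewrite (partition_big_seq _ uN hA); apply: eq_bigr => k _.
  by rewrite mulr_sumr; apply: eq_bigr => kl /eqP ->.
rewrite (eq_bigr (fun kl => pi kl.1 * z kl - pi kl.2 * z kl)) => [|kl _]; last first.
  by rewrite mulrBl.
rewrite sumrB !fibers => [|kl /AN /andP[]//|kl /AN /andP[]//].
rewrite -sumrB big_seq (eq_bigr (fun k => pi k * (k == S)%:R - pi k * (k == E)%:R)).
  have pick x : x \in N -> \sum_(k <- N) pi k * (k == x)%:R = pi x.
    move=> xN; rewrite -(big_pred1_seq pi uN xN) [RHS]big_mkcond.
    by apply: eq_bigr => k _; case: eqP; rewrite ?mulr1 ?mulr0.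
  by rewrite -big_seq sumrB !pick.
move=> k kN; rewrite -!mulrBr hz //.
congr (_ * _); case: (eqVneq k S) => [->|_].
  by rewrite (negPf SE) subr0.
by case: (eqVneq k E) => _ /=; rewrite ?sub0r ?subrr ?mulr1n ?oppr0.
Qed.

Hypothesis uA : uniq A.

Lemma walk_unit_flow (q : nat -> T) (m : nat) :
  let P := [seq (q j, q j.+1) | j <- iota 0 m] in
  q 0%N = S -> q m = E -> uniq P -> {subset P <= A} ->
  is_unit_flow (fun kl => (kl \in P)%:R).
Proof.
move=> P q0 qm uP sPA k _.
have ind (Q : pred (T * T)) :
    \sum_(kl <- A | Q kl) (kl \in P)%:R = \sum_(kl <- P | Q kl) (1 : R).
  rewrite -(@big_indicator_sub _ _ A P Q (fun=> 1) uA uP sPA).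
  by apply: eq_bigr => kl _; rewrite mul1r.
have count (f : nat -> T) :
    \sum_(j <- iota 0 m | f j == k) (1 : R) = \sum_(j <- iota 0 m) (f j == k)%:R.
  by rewrite big_mkcond; apply: eq_bigr => j _; case: eqP.
rewrite !ind !big_map (count q) (count (fun j => q j.+1)) -sumrB.
rewrite (eq_bigr (fun j => - ((q j.+1 == k)%:R - (q j == k)%:R))) => [|j _]; last first.
  by rewrite opprB.
rewrite sumrN -{1}(subn0 m) telescope_sumr // opprB q0 qm.
case: (eqVneq k S) => [->|_]; first by rewrite eq_sym (negPf SE) subr0.
by case: (eqVneq k E) => _ /=; rewrite ?mulr0n ?mulr1n ?sub0r ?oppr0.
Qed.

End UnitFlow.

Section OptionMax.
Variables (disp : Order.disp_t) (T : orderType disp).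

Definition omax (o1 o2 : option T) : option T :=
  match o1, o2 with
  | Some a, Some b => Some (Order.max a b)
  | Some a, None => Some a
  | None, o => o
  end.

Definition omax_seq (l : seq (option T)) : option T := foldr omax None l.

Lemma omax_seq_None l : omax_seq l = None -> {in l, forall o, o = None}.
Proof.
elim: l => [|o l IH] //=; case: o => [a|] /=; first by case: (omax_seq l).
by move=> h o; rewrite inE => /predU1P[-> //|]; apply: IH.
Qed.

Lemma omax_seq_ge l b : Some b \in l -> exists2 a, omax_seq l = Some a & (b <= a)%O.
Proof.
elim: l => [|o l IH] //=; rewrite inE => /predU1P[<-|/IH[a -> ba]].
  by case: (omax_seq l) => [c|] /=; [exists (Order.max b c); rewrite ?le_max ?lexx | exists b].
by case: o => [c|] /=; [exists (Order.max c a); rewrite ?le_max ?ba ?orbT | exists a].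
Qed.

Lemma omax_seq_mem l a : omax_seq l = Some a -> Some a \in l.
Proof.
elim: l a => [|o l IH] a //=; case: o => [c|] /=; last by move/IH; rewrite inE orbC => ->.
case e: (omax_seq l) => [b|] [<-]; rewrite inE; last by rewrite eqxx.
by case: (leP c b) => _; rewrite ?eqxx // (IH b e) orbT.
Qed.

End OptionMax.

Section Network.
Variables (R : realType) (n K : nat) (d0 C : R).

Local Notation N := (nodes n K d0 C).
Local Notation A := (arcs n K d0 C).

Lemma nodeS_in : nodeS R \in N.
Proof. by rewrite mem_undup !inE eqxx. Qed.

Lemma nodeE_in : nodeE R n \in N.
Proof. by rewrite mem_undup !inE eqxx orbT. Qed.

Lemma nodeS_neq_E : nodeS R != nodeE R n.
Proof. by []. Qed.

Lemma Lset_in_nodes i lb y : (1 <= i <= n)%N -> (lb <= K)%N ->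
  y \in Yset n d0 C i -> ((i, lb), y) \in N.
Proof.
move=> hi hlb hy; rewrite mem_undup !inE; apply/orP; right; apply/orP; right.
apply/flatten_mapP; exists i; first by rewrite mem_iota; lia.
by apply: (allpairs_f (fun lb y => ((i, lb), y))); rewrite // mem_iota; lia.
Qed.

Lemma nodesP k : k \in N -> [\/ k = nodeS R, k = nodeE R n |
  [/\ (1 <= layer k <= n)%N, (lbar k <= K)%N & yval k \in Yset n d0 C (layer k)]].
Proof.
rewrite mem_undup !inE => /orP[/eqP->|/orP[/eqP->|/flatten_mapP[i]]];
  [exact: Or31 | exact: Or32 |].
rewrite mem_iota => hi /allpairsP [[lb y] [hlb hy ->]]; apply: Or33.
by move: hlb; rewrite mem_iota /layer /lbar /yval /=; split => //; lia.
Qed.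

Lemma layer_nodes k : k \in N -> (layer k <= n.+1)%N.
Proof. by case/nodesP => [->|->|[/andP[_ ?] _ _]] //; apply: leqW. Qed.

Lemma nodes_layerE k : k \in N -> layer k = n.+1 -> k = nodeE R n.
Proof. by case/nodesP => [->|->|[/andP[_ ?] _ _]] // hk; lia. Qed.

Lemma mem_arcs k l : ((k, l) \in A) = [&& k \in N, l \in N & is_arc n d0 (k, l)].
Proof.
rewrite /arcs mem_filter andbC.
have -> : ((k, l) \in [seq (x, y) | x <- N, y <- N]) = (k \in N) && (l \in N).
  by apply/allpairsP/andP => [[[a b] [/= ha hb [-> ->]]]|[hk hl]] //; exists (k, l).
by rewrite -andbA.
Qed.

Lemma arcs_nodes kl : kl \in A -> (kl.1 \in N) && (kl.2 \in N).
Proof. by case: kl => k l; rewrite mem_arcs => /and3P[-> ->]. Qed.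

Lemma uniq_arcs : uniq A.
Proof.
rewrite filter_uniq // allpairs_uniq ?undup_uniq //.
by move=> [a b] [c d] _ _ /= [-> ->].
Qed.

Lemma layer_arc k l : (k, l) \in A -> layer l = (layer k).+1.
Proof.
rewrite mem_arcs => /and3P[_ _]; rewrite /is_arc /= => /orP[/orP[]|].
- by case/and3P => /eqP -> /eqP ->.
- by case/and4P => /eqP -> /eqP ->.
- by case/and4P => h2 /eqP h3 _ _; lia.
Qed.

Lemma lbar_arc_from_S k l : (k, l) \in A -> layer k = 0%N -> (lbar l <= 1)%N.
Proof.
rewrite mem_arcs => /and3P[_ _]; rewrite /is_arc /= => /orP[/orP[]|] + h0.
- by case/and3P.
- by case/and4P => _ _ /eqP ->.
- by case/and4P => /andP[h2 _] /eqP h _ _; lia.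
Qed.

Lemma arc_inner k l : (k, l) \in A -> (2 <= layer l <= n)%N ->
  ((lbar l == lbar k) || (lbar l == (lbar k).+1)) &&
  ((yval k == - d0) || (yval k == yval l + ((lbar k)%:R - (lbar l)%:R + 1))).
Proof.
rewrite mem_arcs => /and3P[_ _]; rewrite /is_arc /= => /orP[/orP[]|] + hl.
- by case/and3P => _ /eqP h _; lia.
- by case/and4P => /eqP h _ _ _; lia.
- by case/and4P => _ _ -> ->.
Qed.

Hypotheses (d0_ge0 : 0 <= d0) (C_ge0 : 0 <= C).

Lemma Yset_ge y i : y \in Yset n d0 C i -> - d0 <= y.
Proof.
rewrite mem_cat => /orP[] /mapP [m _ ->]; first by rewrite lerDl.
by rewrite (@le_trans _ _ 0) ?oppr_le0 // addr_ge0.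
Qed.

Lemma Yset_last y : y \in Yset n d0 C n -> y <= C.
Proof.
rewrite /Yset subnn !inE => /orP[] /eqP ->; rewrite addr0 //.
by rewrite (le_trans _ C_ge0) // oppr_le0.
Qed.

End Network.

Section RecourseDuality.
Variables (R : realType) (n : nat) (d0 C : R) (s : nat -> R).

Local Notation obj := (recourse_obj n (fun _ => 1) (fun _ => d0) C).

Lemma sum_by_parts_recourse (y w v : nat -> R) m :
  \sum_(1 <= i < m.+1) y i * (w i.+1 - v i - w i) =
  y m * w m.+1 - y 0%N * w 1%N + \sum_(1 <= i < m.+1) ((y i.-1 - y i) * w i - y i * v i).
Proof.
elim: m => [|m IH]; first by rewrite !big_geq //; ring.
by rewrite big_nat_recr //= IH [X in _ = _ + X]big_nat_recr //=; ring.
Qed.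

Lemma recourse_duality_gap (lam mu w v y : nat -> R) : recourse_feas n s mu w v ->
  obj lam w v - \sum_(1 <= i < n.+1) y i * (mu i - s i)
  = \sum_(1 <= i < n.+1) ((lam i - y i.-1 + y i) * w i + (d0 + y i) * v i)
    + (C - y n) * w n.+1.
Proof.
move=> [hf [_ [w1 _]]].
have -> : \sum_(1 <= i < n.+1) y i * (mu i - s i) =
          \sum_(1 <= i < n.+1) y i * (w i.+1 - v i - w i).
  by apply: eq_big_nat => i hi; rewrite (hf i.+1) /=; [ring | lia].
rewrite sum_by_parts_recourse w1 /recourse_obj.
have -> : \sum_(1 <= i < n.+1) ((lam i - y i.-1 + y i) * w i + (d0 + y i) * v i) =
   \sum_(1 <= i < n.+1) (1 * lam i * w i + d0 * v i) -
   \sum_(1 <= i < n.+1) ((y i.-1 - y i) * w i - y i * v i).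
  by rewrite -sumrB; apply: eq_bigr => i _; ring.
ring.
Qed.

Definition dual_feasible (lam y : nat -> R) :=
  [/\ forall i, (1 <= i <= n)%N -> - d0 <= y i, y n <= C &
      forall i, (2 <= i <= n)%N -> y i.-1 - y i <= lam i].

Lemma weak_duality (lam mu w v y : nat -> R) : recourse_feas n s mu w v ->
  (forall i, (1 <= i <= n)%N -> 0 <= lam i) -> dual_feasible lam y ->
  \sum_(1 <= i < n.+1) y i * (mu i - s i) <= obj lam w v.
Proof.
move=> hf hlam [hy hyn hyl]; rewrite -subr_ge0 (recourse_duality_gap _ _ hf).
have [_ [hw [w1 hv]]] := hf.
apply: addr_ge0; last by apply: mulr_ge0; [rewrite subr_ge0 | apply: hw; lia].
rewrite big_nat; apply: sumr_ge0 => i hi; apply: addr_ge0; last first.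
  by apply: mulr_ge0; [have := hy i hi; lra | apply: hv].
case: i hi => [|[|i]] hi; first lia.
  by rewrite w1 mulr0.
by apply: mulr_ge0; [have := hyl i.+2 hi; rewrite /=; lra | apply: hw; lia].
Qed.

Fixpoint w_greedy (mu : nat -> R) (i : nat) : R :=
  if i is i'.+1 then
    if i' is 0 then 0 else
    let x := w_greedy mu i' + mu i' - s i' in if 0 < x then x else 0
  else 0.

Definition v_greedy (mu : nat -> R) (i : nat) : R :=
  w_greedy mu i.+1 - (w_greedy mu i + mu i - s i).

Lemma w_greedy_ge0 mu i : 0 <= w_greedy mu i.
Proof. by case: i => [|[|i]] //=; case: ifP => // /ltW. Qed.

Lemma w_greedyS mu i : (1 <= i)%N -> w_greedy mu i.+1 =
  if 0 < w_greedy mu i + mu i - s i then w_greedy mu i + mu i - s i else 0.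
Proof. by case: i. Qed.

Lemma recourse_feas_greedy mu : recourse_feas n s mu (w_greedy mu) (v_greedy mu).
Proof.
split; [|split; [|split]] => //.
- by move=> i hi; rewrite /v_greedy prednK; [ring | lia].
- by move=> i _; apply: w_greedy_ge0.
- move=> [|i] hi; first lia.
  by rewrite /v_greedy /=; case: ifP => [_|/negbT]; rewrite ?subrr // sub0r oppr_ge0 -leNgt.
Qed.

Lemma dual_feasible_const lam : 0 <= d0 -> 0 <= C ->
  (forall i, (1 <= i <= n)%N -> 0 <= lam i) -> dual_feasible lam (fun=> - d0).
Proof.
move=> d0_ge0 C_ge0 hlam; split => // [|i hi]; last by rewrite subrr hlam //; lia.
by rewrite (le_trans _ C_ge0) // oppr_le0.
Qed.

Lemma g_val_ge_dual (lam mu y : nat -> R) :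
  (forall i, (1 <= i <= n)%N -> 0 <= lam i) -> dual_feasible lam y ->
  \sum_(1 <= i < n.+1) y i * (mu i - s i) <= g_val n (fun=> 1) (fun=> d0) C s mu lam.
Proof.
move=> hlam hy; apply: lb_le_inf.
  by exists (obj lam (w_greedy mu) (v_greedy mu)), (w_greedy mu), (v_greedy mu);
    split => //; apply: recourse_feas_greedy.
by move=> r [w [v [hf ->]]]; apply: weak_duality.
Qed.

Section OptimalDual.
Variables lam mu : nat -> R.

Local Notation w := (w_greedy mu).

Fixpoint y_back (k : nat) : R :=
  if k is k'.+1 then
    if 0 < w (n - k') then y_back k' + lam (n - k') else - d0
  else if 0 < w n.+1 then C else - d0.

Definition y_opt (i : nat) : R := y_back (n - i).

Lemma y_opt_last : y_opt n = if 0 < w n.+1 then C else - d0.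
Proof. by rewrite /y_opt subnn. Qed.

Lemma y_optS i : (1 <= i < n)%N ->
  y_opt i = if 0 < w i.+1 then y_opt i.+1 + lam i.+1 else - d0.
Proof.
move=> hi; rewrite /y_opt (_ : n - i = (n - i.+1).+1)%N; last lia.
by rewrite /= (_ : n - (n - i.+1) = i.+1)%N //; lia.
Qed.

Lemma y_opt_idle i : (1 <= i <= n)%N -> ~~ (0 < w i.+1) -> y_opt i = - d0.
Proof.
move=> hi hw; have [ein|ne] := eqVneq i n.
  by move: hw; rewrite ein y_opt_last => /negPf ->.
by rewrite y_optS ?(negPf hw) //; lia.
Qed.

Lemma recourse_obj_greedy :
  obj lam w (v_greedy mu) = \sum_(1 <= i < n.+1) y_opt i * (mu i - s i).
Proof.
have w0 j : ~~ (0 < w j) -> w j = 0.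
  by move=> hj; apply/eqP; rewrite eq_le w_greedy_ge0 andbT leNgt.
(* Complementary slackness: every term of the duality gap vanishes. *)
apply/eqP; rewrite -subr_eq0 (recourse_duality_gap _ _ (recourse_feas_greedy mu)).
have -> : (C - y_opt n) * w n.+1 = 0.
  by rewrite y_opt_last; case: ifP => [_|/negbT/w0 ->]; rewrite ?subrr ?mul0r ?mulr0.
rewrite addr0 big_nat big1 // => i hi.
have -> : (lam i - y_opt i.-1 + y_opt i) * w i = 0.
  case: i hi => [|[|i]] hi; first lia.
    by rewrite /= mulr0.
  rewrite [_.-1]/= y_optS; last lia.
  by case: ifP => [_|/negbT/w0 ->]; rewrite ?mulr0 //; ring.
rewrite add0r; have [|wn] := boolP (0 < w i.+1); last by rewrite y_opt_idle // addrN mul0r.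
rewrite /v_greedy w_greedyS; last lia.
by case: ifP => [_ _|_]; rewrite ?ltxx // subrr mulr0.
Qed.

Lemma g_val_le_y_opt : 0 <= d0 -> 0 <= C ->
  (forall i, (1 <= i <= n)%N -> 0 <= lam i) ->
  g_val n (fun=> 1) (fun=> d0) C s mu lam <= \sum_(1 <= i < n.+1) y_opt i * (mu i - s i).
Proof.
move=> d0_ge0 C_ge0 hlam; rewrite -recourse_obj_greedy.
apply: ge_inf; last by exists w, (v_greedy mu); split => //; apply: recourse_feas_greedy.
exists (\sum_(1 <= i < n.+1) (- d0) * (mu i - s i)).
by move=> r [w' [v [hf ->]]]; apply: weak_duality => //; apply: dual_feasible_const.
Qed.

Lemma y_opt_in_Yset i : (forall i, (1 <= i <= n)%N -> lam i = 0 \/ lam i = 1) ->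
  (1 <= i <= n)%N -> y_opt i \in Yset n d0 C i.
Proof.
move=> hlam hi.
have y_backE k : (k < n)%N -> exists2 m, (m <= k)%N &
    y_back k = - d0 + m%:R \/ y_back k = C + m%:R.
  elim: k => [|k IH] hk /=.
    by exists 0%N => //; case: ifP => _; [right|left]; rewrite addr0.
  case: ifP => _; last by exists 0%N => //; left; rewrite addr0.
  have [m hm hy] := IH (ltnW hk).
  case: (hlam (n - k)%N ltac:(lia)) => ->; first by exists m; rewrite ?addr0 //; lia.
  by exists m.+1; [lia | rewrite -addn1 natrD; case: hy => ->; [left|right]; ring].
have [m hm hy] := y_backE (n - i)%N ltac:(lia).
rewrite /y_opt mem_cat; apply/orP.
by case: hy => ->; [left|right]; apply: (map_f (fun m : nat => _ + m%:R)); rewrite mem_iota; lia.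
Qed.

End OptimalDual.

End RecourseDuality.

Section Paths.
Variables (R : realType) (n K : nat) (d0 C : R) (uL uU : nat -> R) (p rho : R)
  (s muh lamh : nat -> R).

Local Notation N := (nodes n K d0 C).
Local Notation A := (arcs n K d0 C).
Local Notation glen := (arc_len n uL uU p rho s muh lamh).
Local Notation f := (f_ij uL uU p rho s muh lamh).
Local Notation omega := (omega' n K d0 C uL uU p rho s muh lamh).

Definition is_path (q : nat -> node R) :=
  q 0%N = nodeS R /\ forall j, (j <= n)%N -> (q j, q j.+1) \in A.

Definition path_length (q : nat -> node R) := \sum_(0 <= j < n.+1) glen (q j, q j.+1).

Definition path_lam (q : nat -> node R) (i : nat) : R :=
  (lbar (q i.-1))%:R - (lbar (q i))%:R + 1.

Section OnePath.
Variable q : nat -> node R.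
Hypothesis hq : is_path q.

Lemma path_layer j : (j <= n.+1)%N -> layer (q j) = j.
Proof.
elim: j => [|j IH] hj; first by rewrite hq.1.
by rewrite (layer_arc (hq.2 j _)) ?IH //; lia.
Qed.

Lemma path_nodes j : (j <= n.+1)%N -> q j \in N.
Proof.
case: j => [|j] hj; first by rewrite hq.1 nodeS_in.
by have /arcs_nodes/andP[] := hq.2 j hj.
Qed.

Lemma path_last : q n.+1 = nodeE R n.
Proof. by apply: nodes_layerE; [apply: path_nodes | apply: path_layer]. Qed.

Lemma path_length_sum_f : (1 <= n)%N ->
  path_length q = \sum_(1 <= i < n.+1) f i (path_lam q i) (yval (q i)).
Proof.
move=> n_ge1; rewrite /path_length big_nat_recr //= /arc_len !path_layer // eqxx.
rewrite (_ : (n == 0%N) = false) ?addr0; last by apply/eqP; lia.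
rewrite big_add1 /=; apply: eq_big_nat => j hj.
rewrite /path_lam !path_layer /=; try lia.
case: eqP => [->|_]; first by rewrite hq.1 /= sub0r addrC.
by rewrite (_ : (j.+1 == n.+1) = false) //; apply/eqP; lia.
Qed.

Lemma path_length_le_path_lp :
  ((path_length q)%:E <= path_lp n K d0 C uL uU p rho s muh lamh)%E.
Proof.
set P := [seq (q j, q j.+1) | j <- iota 0 n.+1].
have uP : uniq P.
  rewrite map_inj_in_uniq ?iota_uniq // => i j; rewrite !mem_iota => hi hj [e _].
  by rewrite -(path_layer (j := i)) ?e ?path_layer //; lia.
have sPA : {subset P <= A}.
  by move=> kl /mapP [j hj ->]; apply: hq.2; move: hj; rewrite mem_iota; lia.
apply: ereal_sup_ubound; exists (fun kl => (kl \in P)%:R); split; [|split].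
- by move=> kl _; rewrite ler0n.
- exact: (walk_unit_flow _ (nodeS_neq_E _ _) (uniq_arcs _ _ _ _) hq.1 path_last uP sPA).
- rewrite (@big_indicator_sub _ _ A P xpredT glen) ?uniq_arcs //.
  by rewrite big_map /path_length /index_iota subn0.
Qed.

Lemma path_lbar_step i : (1 <= i <= n)%N ->
  (lbar (q i) == lbar (q i.-1)) || (lbar (q i) == (lbar (q i.-1)).+1).
Proof.
case: i => [|[|i]] hi; first lia.
  have := lbar_arc_from_S (hq.2 0%N isT); rewrite path_layer // => /(_ erefl).
  by rewrite /= hq.1 /lbar /=; lia.
have /arc_inner := hq.2 i.+1 ltac:(lia).
by rewrite path_layer; [move=> /(_ ltac:(lia)) /andP[] | lia].
Qed.

Lemma path_lbar_Yset i : (1 <= i <= n)%N ->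
  (lbar (q i) <= K)%N /\ yval (q i) \in Yset n d0 C i.
Proof.
move=> hi; have hl := path_layer (j := i) ltac:(lia).
case/nodesP: (path_nodes (j := i) ltac:(lia)) => [e|e|[_ ? hY]]; last by rewrite hl in hY.
all: by rewrite e /layer /= in hl; lia.
Qed.

Lemma path_lam01 i : (1 <= i <= n)%N -> path_lam q i = 0 \/ path_lam q i = 1.
Proof.
move=> hi; rewrite /path_lam; case/orP: (path_lbar_step hi) => /eqP ->.
  by right; rewrite subrr add0r.
by left; rewrite -addn1 natrD; ring.
Qed.

Lemma path_noshow_budget : \sum_(1 <= i < n.+1) (1 - path_lam q i) <= K%:R.
Proof.
rewrite (eq_bigr (fun i => (lbar (q i))%:R - (lbar (q i.-1))%:R)) => [|i _]; last first.
  by rewrite /path_lam; ring.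
rewrite big_add1 /= telescope_sumr // hq.1 subr0 ler_nat.
case/nodesP: (path_nodes (leqnSn n)) => [->|e|[]] //.
by have := path_layer (leqnSn n); rewrite e /layer /=; lia.
Qed.

Lemma path_dual_feasible : 0 <= d0 -> 0 <= C ->
  dual_feasible n d0 C (path_lam q) (fun i => yval (q i)).
Proof.
move=> d0_ge0 C_ge0; split => [i hi | | i hi] /=.
- exact: (Yset_ge d0_ge0 C_ge0 (path_lbar_Yset hi).2).
- case/nodesP: (path_nodes (leqnSn n)) => [->|e|[_ _]] //.
    by have := path_layer (leqnSn n); rewrite e /layer /=; lia.
  by rewrite path_layer //; apply: Yset_last.
- have /arc_inner := hq.2 i.-1 ltac:(lia); rewrite prednK ?path_layer; try lia.
  move=> /(_ hi) /andP[_ /orP[/eqP ->|/eqP ->]]; last by rewrite /path_lam; lra.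
  have := Yset_ge d0_ge0 C_ge0 (path_lbar_Yset (i := i) ltac:(lia)).2.
  by case: (path_lam01 (i := i) ltac:(lia)) => ->; lra.
Qed.

End OnePath.

Lemma sum_stage_terms (y mu lam : nat -> R) :
  \sum_(1 <= i < n.+1) (y i * (mu i - s i) - rho * (`|mu i - muh i| `^ p)
     - rho * (`|lam i - lamh i| `^ p)) =
  \sum_(1 <= i < n.+1) y i * (mu i - s i) - rho * dist_pp n p mu lam muh lamh.
Proof. by rewrite /dist_pp mulr_sumr -sumrB; apply: eq_bigr => i _; ring. Qed.

Section StageBounds.
Hypothesis uLU : forall i, (1 <= i <= n)%N -> 0 <= uL i /\ uL i < uU i.
Hypothesis rho_ge0 : 0 <= rho.

Lemma f_ij_has_sup i la y : (1 <= i <= n)%N -> la = 0 \/ la = 1 ->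
  has_sup [set r | exists mu, uL i * la <= mu <= uU i * la /\
     r = y * (mu - s i) - rho * (`|mu - muh i| `^ p) - rho * (`|la - lamh i| `^ p)].
Proof.
move=> hi hla; have [hL hLU] := uLU hi; split.
  exists (y * (uL i * la - s i) - rho * (`|uL i * la - muh i| `^ p)
            - rho * (`|la - lamh i| `^ p)).
  exists (uL i * la); split => //; rewrite lexx /=.
  by case: hla => ->; rewrite ?mulr0 ?mulr1 // ltW.
exists (`|y| * (`|uL i * la| + `|uU i * la| + `|s i|)) => r [m [/andP[h1 h2] ->]].
have q1 : 0 <= rho * (`|m - muh i| `^ p) by rewrite mulr_ge0 ?powR_ge0.
have q2 : 0 <= rho * (`|la - lamh i| `^ p) by rewrite mulr_ge0 ?powR_ge0.
apply: (@le_trans _ _ (y * (m - s i))); first lra.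
apply: (le_trans (ler_norm _)); rewrite normrM ler_wpM2l //.
apply: (le_trans (ler_normB _ _)); rewrite lerD2r ler_norml.
have := ler_norm (uU i * la); have := ler_norm (- (uL i * la)); rewrite normrN.
have := normr_ge0 (uU i * la); have := normr_ge0 (uL i * la); lra.
Qed.

Lemma f_ij_ge i la y mu : (1 <= i <= n)%N -> la = 0 \/ la = 1 ->
  uL i * la <= mu <= uU i * la ->
  y * (mu - s i) - rho * (`|mu - muh i| `^ p) - rho * (`|la - lamh i| `^ p) <= f i la y.
Proof. by move=> hi hla hmu; apply: sup_upper_bound; [apply: f_ij_has_sup | exists mu]. Qed.

Lemma sum_f_le_omega (lam y : nat -> R) : (1 <= n)%N ->
  (forall i, (1 <= i <= n)%N -> lam i = 0 \/ lam i = 1) ->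
  \sum_(1 <= i < n.+1) (1 - lam i) <= K%:R -> dual_feasible n d0 C lam y ->
  ((\sum_(1 <= i < n.+1) f i (lam i) (y i))%:E <= omega)%E.
Proof.
move=> n_ge1 hlam hK hy; apply/lee_subgt0Pr => e e0.
(* Pick each [mu i] within [e / n] of the supremum defining [f i]. *)
have n_gt0 : 0 < n%:R :> R by rewrite ltr0n.
have e'_gt0 : 0 < e / n%:R by rewrite divr_gt0.
have /choice [mu hmu] : forall i, exists mu, (1 <= i <= n)%N ->
    uL i * lam i <= mu <= uU i * lam i /\ f i (lam i) (y i) - e / n%:R <
    y i * (mu - s i) - rho * (`|mu - muh i| `^ p) - rho * (`|lam i - lamh i| `^ p).
  move=> i; have [hi|] := boolP (1 <= i <= n)%N; last by exists 0.
  have [r [mu [hmu ->]] hr] := sup_adherent e'_gt0 (f_ij_has_sup (y i) hi (hlam i hi)).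
  by exists mu.
have hlam0 i : (1 <= i <= n)%N -> 0 <= lam i by case/hlam => ->.
apply: le_trans (ereal_sup_ubound _); last first.
  by exists mu, lam; split => //; split => //; split => // i /hmu[].
rewrite -EFinB lee_fin.
apply: le_trans (lerB (g_val_ge_dual s mu hlam0 hy) (lexx _)).
rewrite -sum_stage_terms.
have -> : \sum_(1 <= i < n.+1) f i (lam i) (y i) - e =
          \sum_(1 <= i < n.+1) (f i (lam i) (y i) - e / n%:R).
  by rewrite sumrB sumr_const_nat subn1 succnK -[_ *+ n]mulr_natr divfK ?gt_eqF.
by rewrite !big_nat; apply: ler_sum => i /hmu[_ /ltW].
Qed.

Lemma path_length_le_omega q : (1 <= n)%N -> 0 <= d0 -> 0 <= C ->
  is_path q -> ((path_length q)%:E <= omega)%E.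
Proof.
move=> n_ge1 d0_ge0 C_ge0 hq; rewrite path_length_sum_f //.
by apply: sum_f_le_omega; [|exact: path_lam01|exact: path_noshow_budget|exact: path_dual_feasible].
Qed.

End StageBounds.

End Paths.

Section NoShowCount.
Variables (R : realType) (n K : nat) (lam : nat -> R).
Hypothesis lam01 : forall i, (1 <= i <= n)%N -> lam i = 0 \/ lam i = 1.
Hypothesis lam_budget : \sum_(1 <= i < n.+1) (1 - lam i) <= K%:R.

Definition noshows (i : nat) : nat := (\sum_(1 <= j < i.+1) (lam j == 0%R))%N.

Lemma noshows0 : noshows 0 = 0%N.
Proof. by rewrite /noshows big_geq. Qed.

Lemma noshowsS i : noshows i.+1 = (noshows i + (lam i.+1 == 0%R))%N.
Proof. by rewrite /noshows big_nat_recr. Qed.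

Lemma noshows_step i : (1 <= i <= n)%N -> (noshows i.-1)%:R - (noshows i)%:R + 1 = lam i.
Proof.
case: i => [|i] hi //; rewrite noshowsS natrD.
by case: (lam01 hi) => ->; rewrite ?eqxx ?oner_eq0 /=; ring.
Qed.

Lemma noshows_le_K i : (i <= n)%N -> (noshows i <= K)%N.
Proof.
move=> hi; rewrite -(ler_nat R); apply: le_trans lam_budget.
have -> : (noshows i)%:R = \sum_(1 <= j < i.+1) (1 - lam j) :> R.
  rewrite /noshows natr_sum; apply: eq_big_nat => j hj.
  by case: (lam01 (i := j) ltac:(lia)) => ->; rewrite ?eqxx ?oner_eq0 ?subr0 ?subrr.
rewrite [X in _ <= X](big_cat_nat _ (n := i.+1)) //=.
rewrite lerDl big_nat sumr_ge0 // => j hj.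
by rewrite subr_ge0; case: (lam01 (i := j) ltac:(lia)) => ->.
Qed.

End NoShowCount.

Section ScenarioPath.
Variables (R : realType) (n K : nat) (d0 C : R) (s lam mu : nat -> R).

Local Notation N := (nodes n K d0 C).

Local Notation y := (y_opt n d0 C s lam mu).

Definition scenario_node (j : nat) : node R :=
  if j == 0%N then nodeS R else if j == n.+1 then nodeE R n
  else ((j, noshows lam j), y j).

Lemma scenario_nodeE j : (1 <= j <= n)%N -> scenario_node j = ((j, noshows lam j), y j).
Proof.
move=> hj; rewrite /scenario_node ifN_eq; last by apply/eqP; lia.
by rewrite ifN_eq //; apply/eqP; lia.
Qed.

Lemma scenario_node_last : scenario_node n.+1 = nodeE R n.
Proof. by rewrite /scenario_node eqxx. Qed.

Hypothesis lam01 : forall i, (1 <= i <= n)%N -> lam i = 0 \/ lam i = 1.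

Lemma scenario_path_lam i : (1 <= i <= n)%N -> path_lam scenario_node i = lam i.
Proof.
move=> hi; rewrite /path_lam -(noshows_step lam01) // [scenario_node i]scenario_nodeE //.
have [e|ne] := posnP i.-1; first by rewrite e noshows0.
by rewrite scenario_nodeE //; lia.
Qed.

Hypothesis lam_budget : \sum_(1 <= i < n.+1) (1 - lam i) <= K%:R.

Lemma scenario_node_in j : (1 <= j <= n)%N -> scenario_node j \in N.
Proof.
move=> hj; rewrite scenario_nodeE //; apply: Lset_in_nodes => //.
  by apply: (noshows_le_K lam01 lam_budget); lia.
exact: y_opt_in_Yset.
Qed.

Lemma scenario_is_path : (1 <= n)%N -> is_path n K d0 C scenario_node.
Proof.
move=> n_ge1; split => // j hj; rewrite mem_arcs.
have [->|j0] := posnP j.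
  rewrite nodeS_in (scenario_node_in (j := 1)) // (scenario_nodeE (j := 1)) //.
  by rewrite /is_arc /layer /lbar /= noshowsS noshows0; case: (lam 1%N == 0).
have [->|jn] := eqVneq j n.
  rewrite scenario_node_last nodeE_in scenario_node_in ?scenario_nodeE ?n_ge1 ?leqnn //.
  by rewrite /is_arc /layer /lbar /yval /= !eqxx orbT.
rewrite !scenario_node_in ?scenario_nodeE //=; try lia.
rewrite /is_arc /layer /lbar /yval /=; apply/orP; right.
apply/and4P; split; first (apply/andP; split; lia).
- by [].
- by rewrite noshowsS; case: (lam j.+1 == 0); rewrite /= ?addn0 ?addn1 eqxx ?orbT.
- rewrite -[noshows lam j]/(noshows lam j.+1.-1) (noshows_step lam01); last lia.
  by rewrite y_optS; [case: ifP => _; rewrite eqxx ?orbT | lia].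
Qed.

End ScenarioPath.

Section Potentials.
Variables (R : realType) (n K : nat) (d0 C : R) (uL uU : nat -> R) (p rho : R)
  (s muh lamh : nat -> R).

Local Notation N := (nodes n K d0 C).
Local Notation A := (arcs n K d0 C).
Local Notation glen := (arc_len n uL uU p rho s muh lamh).

(* Length of a longest path from [k] to E, or [None] if E cannot be reached from [k];
   [fuel] bounds the number of layers still to cross. *)
Fixpoint longest_fuel (fuel : nat) (k : node R) : option R :=
  if layer k == n.+1 then Some 0 else
  if fuel is fuel'.+1 then
    omax_seq [seq omap (fun b => glen kl + b) (longest_fuel fuel' kl.2) | kl <- A & kl.1 == k]
  else None.

Definition longest (k : node R) : option R := longest_fuel (n.+1 - layer k) k.

Lemma longest_fuel_top fuel k : layer k = n.+1 -> longest_fuel fuel k = Some 0.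
Proof. by case: fuel => [|fuel] /= ->; rewrite eqxx. Qed.

Lemma longest_E : longest (nodeE R n) = Some 0.
Proof. exact: longest_fuel_top. Qed.

Lemma longestE k : (layer k <= n)%N ->
  longest k = omax_seq [seq omap (fun b => glen kl + b) (longest kl.2) | kl <- A & kl.1 == k].
Proof.
move=> hk; rewrite /longest (_ : n.+1 - layer k = (n - layer k).+1)%N; last lia.
rewrite /= ifN_eq; last by apply/eqP; lia.
congr omax_seq; apply/eq_in_map => -[k' l]; rewrite mem_filter /= => /andP[/eqP -> kl].
by rewrite (layer_arc kl) subSS.
Qed.

Lemma longest_arc k l b : (k, l) \in A -> longest l = Some b ->
  exists2 a, longest k = Some a & glen (k, l) + b <= a.
Proof.
move=> kl hb; have hl := layer_arc kl.
have hk : (layer k <= n)%N.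
  by have /andP[_ /layer_nodes] := arcs_nodes kl; rewrite /= hl.
rewrite longestE //; apply: omax_seq_ge; apply/mapP; exists (k, l); last by rewrite /= hb.
by rewrite mem_filter /= eqxx.
Qed.

Lemma longest_suffix_path k a : k \in N -> longest k = Some a -> exists q : nat -> node R,
  [/\ q (layer k) = k, forall j, (layer k <= j <= n)%N -> (q j, q j.+1) \in A &
      a = \sum_(layer k <= j < n.+1) glen (q j, q j.+1)].
Proof.
move: {2}(n.+1 - layer k)%N (erefl (n.+1 - layer k)%N) => m.
elim: m k a => [|m IH] k a hm kN hk.
  have e : layer k = n.+1 by have := layer_nodes kN; lia.
  move: hk; rewrite /longest longest_fuel_top // => -[<-].
  by exists (fun=> k); split => // [j|]; rewrite e ?big_geq //; lia.
have hkn : (layer k <= n)%N by lia.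
move: hk; rewrite longestE // => /omax_seq_mem /mapP [[k' l]].
rewrite mem_filter /= => /andP[/eqP -> kl].
case hl: (longest l) => [b|] //= [ea].
have lN : l \in N by have /andP[] := arcs_nodes kl.
have el := layer_arc kl.
have [|q [ql hq hb]] := IH l b _ lN hl; first by rewrite el; lia.
have Sk : ((layer k).+1 == layer k) = false by rewrite gtn_eqF.
exists (fun j => if j == layer k then k else q j); split.
- by rewrite eqxx.
- move=> j hj; have [->|ne] := eqVneq j (layer k); first by rewrite Sk -el ql.
  have j1k : j.+1 != layer k by apply/eqP; lia.
  by rewrite (negPf j1k); apply: hq; lia.
- rewrite ea big_ltn // eqxx Sk -el ql hb; congr (_ + _).
  apply: eq_big_nat => j hj.
  have [jk j1k] : j != layer k /\ j.+1 != layer k by split; apply/eqP; lia.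
  by rewrite (negPf jk) (negPf j1k).
Qed.

Lemma longest_S_path a : longest (nodeS R) = Some a ->
  exists2 q, is_path n K d0 C q & path_length n uL uU p rho s muh lamh q = a.
Proof.
move=> /(longest_suffix_path (nodeS_in n K d0 C)) [q [q0 hq ->]].
by exists q => //; split => // j hj; apply: hq.
Qed.

Lemma no_arc_into_S kl : kl \in A -> kl.2 != nodeS R.
Proof. by case: kl => k l /layer_arc e /=; apply/eqP => hl; rewrite hl in e. Qed.

Section FlowBound.
Variable z : node R * node R -> R.
Hypothesis z_ge0 : forall kl, kl \in A -> 0 <= z kl.
Hypothesis z_flow : is_unit_flow N A (nodeS R) (nodeE R n) z.

Lemma unit_flow_dead l : l \in N -> longest l = None ->
  forall kl, kl \in A -> kl.2 = l -> z kl = 0.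
Proof.
move: {2}(n.+1 - layer l)%N (leqnn (n.+1 - layer l)) => m.
elim: m l => [|m IH] l hm lN hl.
  by move: hl; rewrite /longest longest_fuel_top //; have := layer_nodes lN; lia.
have hln : (layer l <= n)%N.
  have := layer_nodes lN; rewrite leq_eqVlt ltnS => /predU1P[e|//].
  by rewrite /longest longest_fuel_top in hl.
have out0 : \sum_(kl <- A | kl.1 == l) z kl = 0.
  rewrite big_seq_cond big1 // => -[k' l'] /andP[kl /= /eqP ek]; subst k'.
  have lN' : l' \in N by have /andP[] := arcs_nodes kl.
  apply: (IH l') => //; first by rewrite (layer_arc kl); lia.
  have none := omax_seq_None (etrans (esym (longestE hln)) hl).
  case hl': (longest l') => [b|] //; suff : Some (glen (l, l') + b) = None by [].
  apply: none; apply/mapP; exists (l, l'); first by rewrite mem_filter /= eqxx.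
  by rewrite /= hl'.
move=> kl kA kl2.
have [lS|lS] := eqVneq l (nodeS R); first by move: (no_arc_into_S kA); rewrite kl2 lS eqxx.
have lE : l != nodeE R n by apply/eqP => e; rewrite e longest_E in hl.
have := z_flow lN; rewrite (negPf lS) (negPf lE) out0 sub0r => /eqP; rewrite oppr_eq0.
rewrite big_seq_cond psumr_eq0 => [/allP/(_ kl kA)|kl' /andP[/z_ge0 //]].
by rewrite kA kl2 eqxx => /eqP.
Qed.

Lemma unit_flow_longest_S : exists a, longest (nodeS R) = Some a.
Proof.
case hS: (longest (nodeS R)) => [a|]; first by exists a.
have out0 : \sum_(kl <- A | kl.1 == nodeS R) z kl = 0.
  rewrite big_seq_cond big1 // => -[k l] /andP[kA /= /eqP ek]; subst k.
  have lN : l \in N by have /andP[] := arcs_nodes kA.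
  case hl: (longest l) => [b|]; last exact: (unit_flow_dead lN hl kA).
  by have [a' ha _] := longest_arc kA hl; rewrite ha in hS.
have in0 : \sum_(kl <- A | kl.2 == nodeS R) z kl = 0.
  by rewrite big_seq_cond big1 // => kl /andP[/no_arc_into_S/negPf ->].
by have := z_flow (nodeS_in n K d0 C); rewrite out0 in0 subrr eqxx => /eqP; rewrite eq_sym oner_eq0.
Qed.

Lemma unit_flow_le_longest_S a : longest (nodeS R) = Some a -> \sum_(kl <- A) glen kl * z kl <= a.
Proof.
move=> hS; pose pi k := odflt 0 (longest k).
have step kl : kl \in A -> glen kl * z kl <= (pi kl.1 - pi kl.2) * z kl.
  case: kl => k l kA; have lN : l \in N by have /andP[] := arcs_nodes kA.
  case hl: (longest l) => [b|]; last by rewrite (unit_flow_dead lN hl kA) ?mulr0.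
  have [a' ha hle] := longest_arc kA hl.
  by rewrite ler_wpM2r ?z_ge0 // /pi /= ha hl /= lerBrDr.
apply: (le_trans (y := \sum_(kl <- A) (pi kl.1 - pi kl.2) * z kl)).
  by rewrite big_seq [X in _ <= X]big_seq; apply: ler_sum.
rewrite (unit_flow_potential_diff (undup_uniq _) (nodeS_in n K d0 C) (nodeE_in n K d0 C)
  (nodeS_neq_E _ _) (@arcs_nodes _ _ _ _ _) _ z_flow).
by rewrite /pi hS longest_E /= subr0.
Qed.

End FlowBound.

End Potentials.

Section Duality.
Variables (R : realType) (n K : nat) (d0 C : R) (uL uU : nat -> R) (p rho : R)
  (s muh lamh : nat -> R).
Hypotheses (n_ge1 : (1 <= n)%N) (d0_ge0 : 0 <= d0) (C_ge0 : 0 <= C).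
Hypothesis uLU : forall i, (1 <= i <= n)%N -> 0 <= uL i /\ uL i < uU i.
Hypothesis rho_ge0 : 0 <= rho.

Local Notation omega := (omega' n K d0 C uL uU p rho s muh lamh).
Local Notation path_lp := (path_lp n K d0 C uL uU p rho s muh lamh).

Lemma omega_le_path_lp : (omega <= path_lp)%E.
Proof.
apply: ge_ereal_sup => x [mu [lam [[lam01 [hK hmu]] ->]]].
have hq := scenario_is_path d0 C s mu lam01 hK n_ge1.
apply: le_trans (path_length_le_path_lp uL uU p rho s muh lamh hq).
rewrite lee_fin (path_length_sum_f uL uU p rho s muh lamh hq n_ge1).
have lam_ge0 i : (1 <= i <= n)%N -> 0 <= lam i by case/lam01 => ->.
apply: le_trans (lerB (g_val_le_y_opt s mu d0_ge0 C_ge0 lam_ge0) (lexx _)) _.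
rewrite -sum_stage_terms !big_nat; apply: ler_sum => i hi.
rewrite scenario_path_lam // scenario_nodeE //=.
exact: (f_ij_ge p s muh lamh uLU rho_ge0 _ hi (lam01 i hi) (hmu i hi)).
Qed.

Lemma path_lp_le_omega : (path_lp <= omega)%E.
Proof.
apply: ge_ereal_sup => x [z [z_ge0 [z_flow ->]]].
have [a hS] := unit_flow_longest_S uL uU p rho s muh lamh z_ge0 z_flow.
have [q hq qa] := longest_S_path hS.
apply: le_trans (path_length_le_omega p s muh lamh uLU rho_ge0 n_ge1 d0_ge0 C_ge0 hq).
by rewrite lee_fin qa; apply: unit_flow_le_longest_S.
Qed.

End Duality.

Unset Implicit Arguments.

Theorem proposition5 (R : realType) (n N K : nat) (T d0 C : R)
  (uL uU : nat -> R) (muh lamh : 'I_N -> nat -> R)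
  (j : 'I_N) (rho p : R) (s : nat -> R) :
  (1 <= n)%N -> 0 < T -> 0 <= d0 -> 0 <= C ->
  (forall i, (1 <= i <= n)%N -> 0 <= uL i /\ uL i < uU i) ->
  (1 <= K <= n)%N ->
  (forall j' : 'I_N, inXi n K uL uU (muh j') (lamh j')) ->
  0 <= rho -> 1 <= p ->
  (forall i, (1 <= i <= n)%N -> 0 <= s i) -> \sum_(1 <= i < n.+1) s i <= T ->
  omega' n K d0 C uL uU p rho s (muh j) (lamh j)
  = path_lp n K d0 C uL uU p rho s (muh j) (lamh j).
Proof.
move=> n_ge1 _ d0_ge0 C_ge0 uLU _ _ rho_ge0 _ _ _.
by apply: le_anti; rewrite omega_le_path_lp ?path_lp_le_omega.
Qed.
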